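(* Let $A$ be a $3\times 3$ matrix with real entries whose characteristic polynomial is $P(x)=x^3-bx^2+cx-d$, where $b>1$, $c>0$, $d\in(0,1)$, $1-d<b-c$ and $bc-d>0$. Then: (i) All the real roots of $P$ are located in the interval $(0,b)$. (ii) $P$ has at least one real root in the interval $(1,b)$. (iii) If $P$ has two (non-real) complex roots, then both are located in the unit disk. (iv) If all the roots of $P$ are real, then $P$ has at least one real root in the interval $(0,1)$. (v) $P$ has a single root in the interval $(1,b)$.
   Context: The unit disk means the open set $\{z\in\mathbb{C}:\ |z|<1\}$. *)

From HB Require Import structures.
From mathcomp Require Import all_boot all_order all_algebra.
From mathcomp Require Import reals.
From mathcomp.real_closed Require Import complex.
Set Implicit Arguments. Unset Strict Implicit. Unset Printing Implicit Defensive.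

From HB Require Import structures.
From mathcomp Require Import all_boot all_order all_algebra.
From mathcomp Require Import reals.
From mathcomp.real_closed Require Import complex.
From mathcomp Require Import ring lra.
Import Order.TTheory GRing.Theory Num.Theory.

Set Implicit Arguments.
Unset Strict Implicit.
Unset Printing Implicit Defensive.

Local Open Scope ring_scope.
Local Open Scope complex_scope.

(* Write p for the characteristic polynomial: p(1) = 1 - b + c - d < 0 < bc - d = p(b),
   p < 0 on (-oo, 0] and p > 0 on [b, +oo).  Whenever p = (X - r) q with q = X^2 - sX + e
   and q(1) > 0, p(1) = (1 - r) q(1) < 0 forces r > 1, hence e = d / r < 1.  The
   quadratic factor (X - z)(X - conj z) of a non-real root z gives |z|^2 < 1, and the
   factor (X - x)(X - y) of two distinct roots x, y > 1 would give xy < 1, which is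
   absurd.  Finally, if all roots are real, the quadratic cofactor of a root r > 1 has
   two real roots, positive and of product d / r < 1, so one of them lies in (0, 1). *)

Definition cubic {R : nzRingType} (b c d : R) : {poly R} :=
  'X^3 - b *: 'X^2 + c *: 'X - d%:P.

Lemma horner_cubic (R : comNzRingType) (b c d x : R) :
  (cubic b c d).[x] = x ^+ 3 - b * x ^+ 2 + c * x - d.
Proof. by rewrite !hornerE. Qed.

Lemma map_cubic (R S : nzRingType) (f : {rmorphism R -> S}) (b c d : R) :
  map_poly f (cubic b c d) = cubic (f b) (f c) (f d).
Proof.
by rewrite /cubic !(rmorphB, rmorphD, rmorphN) /= !map_polyZ !map_polyXn map_polyX map_polyC.
Qed.

Lemma cubic_vieta2 (R : idomainType) (b c d z1 z2 : R) : z1 != z2 ->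
    root (cubic b c d) z1 -> root (cubic b c d) z2 ->
  c = z1 * z2 + (b - z1 - z2) * (z1 + z2) /\ d = (b - z1 - z2) * (z1 * z2).
Proof.
rewrite /root !horner_cubic -subr_eq0 => z12 /eqP p1 /eqP p2.
have quot0 : z1 ^+ 2 + z1 * z2 + z2 ^+ 2 - b * (z1 + z2) + c = 0.
  have : (z1 - z2) * (z1 ^+ 2 + z1 * z2 + z2 ^+ 2 - b * (z1 + z2) + c) = 0.
    have -> : (z1 - z2) * (z1 ^+ 2 + z1 * z2 + z2 ^+ 2 - b * (z1 + z2) + c) =
        (z1 ^+ 3 - b * z1 ^+ 2 + c * z1 - d) - (z2 ^+ 3 - b * z2 ^+ 2 + c * z2 - d).
      by ring.
    by rewrite p1 p2 subrr.
  by move/eqP; rewrite mulf_eq0 (negPf z12) => /eqP.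
split; apply/eqP; rewrite -subr_eq0; apply/eqP.
  by rewrite -quot0; ring.
have -> : d - (b - z1 - z2) * (z1 * z2) =
    z1 * (z1 ^+ 2 + z1 * z2 + z2 ^+ 2 - b * (z1 + z2) + c) - (z1 ^+ 3 - b * z1 ^+ 2 + c * z1 - d).
  by ring.
by rewrite quot0 p1 mulr0 subr0.
Qed.

Definition quadratic {R : nzRingType} (s e : R) : {poly R} := 'X^2 - s *: 'X + e%:P.

Lemma horner_quadratic (R : comNzRingType) (s e x : R) :
  (quadratic s e).[x] = x ^+ 2 - s * x + e.
Proof. by rewrite !hornerE. Qed.

Lemma size_quadratic (R : nzRingType) (s e : R) : size (quadratic s e) = 3.
Proof.
rewrite /quadratic -addrA size_polyDl size_polyXn //.
rewrite (leq_ltn_trans (size_polyD _ _)) // gtn_max size_polyN size_polyC.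
by rewrite (leq_ltn_trans (size_scale_leq _ _)) ?size_polyX //; case: (e != 0).
Qed.

Lemma cubic_factor (R : comNzRingType) (b c d r s e : R) :
    b = r + s -> c = e + r * s -> d = r * e ->
  cubic b c d = ('X - r%:P) * quadratic s e.
Proof.
move=> -> -> ->; rewrite /cubic /quadratic -!mul_polyC !rmorphD rmorphM /=.
ring.
Qed.

Lemma quadratic_root_pair (R : comNzRingType) (s e x : R) : root (quadratic s e) x ->
  root (quadratic s e) (s - x) /\ e = x * (s - x).
Proof.
rewrite /root !horner_quadratic => /eqP qx; split.
  by rewrite -qx; apply/eqP; ring.
by apply/eqP; rewrite -subr_eq0 -qx; apply/eqP; ring.
Qed.

Lemma cubic_root_vieta (R : fieldType) (b c d r : R) : r != 0 ->
  root (cubic b c d) r -> c = d / r + r * (b - r).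
Proof.
rewrite /root horner_cubic => r0 /eqP pr; apply: (mulIf r0); apply/eqP.
by rewrite -subr_eq0 -pr; apply/eqP; field.
Qed.

Section RealClosedCubic.

Variables (R : rcfType) (b c d : R).

Lemma cubic_root_bounds x : 0 < c -> 0 < d -> 0 < b * c - d ->
  root (cubic b c d) x -> 0 < x < b.
Proof.
rewrite /root horner_cubic => c_gt0 d_gt0 bc_gtd /eqP px.
have x2_ge0 := sqr_ge0 x; have x3E : x ^+ 3 = x * x ^+ 2 by rewrite exprS.
apply/andP; split; rewrite ltNge; apply/negP => hx.
  have : x * x ^+ 2 <= 0 by apply: mulr_le0_ge0.
  nra.
have : 0 <= x ^+ 2 * (x - b) by apply: mulr_ge0; rewrite ?subr_ge0.
nra.
Qed.

Lemma cubic_root_gt1 : 1 < b -> 1 - d < b - c -> 0 < b * c - d ->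
  exists2 x, 1 < x < b & root (cubic b c d) x.
Proof.
move=> b_gt1 lt_1Bd_bBc bc_gtd.
have p1_lt0 : (cubic b c d).[1] < 0 by rewrite horner_cubic !expr1n; lra.
have pb_gt0 : 0 < (cubic b c d).[b].
  by rewrite horner_cubic (_ : b ^+ 3 - b * b ^+ 2 + c * b - d = b * c - d) //; ring.
have [|x /andP[x_ge1 x_leb] px] := @poly_ivt _ (cubic b c d) 1 b (ltW b_gt1).
  by rewrite (ltW p1_lt0) (ltW pb_gt0).
exists x => //; rewrite !lt_def x_ge1 x_leb !andbT; apply/andP; split.
  by apply: contraTneq px => ->; rewrite /root lt_eqF.
by apply: contraTneq px => <-; rewrite /root gt_eqF.
Qed.

Lemma quadratic_factor_const_lt1 r s e : d < 1 -> 1 - d < b - c ->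
    b = r + s -> c = e + r * s -> d = r * e -> 0 < 1 - s + e -> e < 1.
Proof.
move=> d_lt1 lt_1Bd_bBc bE cE dE q1_gt0.
have r_gt1 : 1 < r by nra.
nra.
Qed.

Lemma cubic_root_gt1_unique x y : d < 1 -> 1 - d < b - c -> 1 < x -> 1 < y ->
  root (cubic b c d) x -> root (cubic b c d) y -> x = y.
Proof.
move=> d_lt1 lt_1Bd_bBc x_gt1 y_gt1 px py; case: (eqVneq x y) => // xy.
have [cE dE] := cubic_vieta2 xy px py.
have bE : b = (b - x - y) + (x + y) by ring.
have := quadratic_factor_const_lt1 d_lt1 lt_1Bd_bBc bE cE dE.
have : 0 < (x - 1) * (y - 1) by rewrite mulr_gt0 // subr_gt0.
nra.
Qed.

Lemma cubic_nonreal_root_norm_lt1 z : d < 1 -> 1 - d < b - c ->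
  root (map_poly (real_complex R) (cubic b c d)) z -> complex.Im z != 0 -> `|z| < 1.
Proof.
move=> d_lt1 lt_1Bd_bBc pz Imz.
have pzJ : root (map_poly (real_complex R) (cubic b c d)) z^*.
  rewrite -complex_root_conj -map_poly_comp.
  by rewrite (eq_map_poly (g := real_complex R)) // => x /=; apply: conjc_real.
have zJ : z != z^*.
  by case: z Imz {pz pzJ} => x y /= y0; rewrite eq_complex /= eqxx /= -addr_eq0 -mulr2n mulrn_eq0.
rewrite map_cubic in pz pzJ.
have [cE dE] := cubic_vieta2 zJ pz pzJ.
case: z {pz pzJ zJ} Imz cE dE => x y /= y0 cE dE.
suff e_lt1 : x ^+ 2 + y ^+ 2 < 1.
  by rewrite normc_def /= (_ : 1 = 1%:C) // ltcR -sqrtr1 ltr_sqrt.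
move: cE dE; rewrite -!complexr0; simpc => -[cE _] [dE _].
have bE : b = (b - x - x) + (x + x) by ring.
have y2_gt0 : 0 < y ^+ 2 by rewrite exprn_even_gt0.
have := quadratic_factor_const_lt1 d_lt1 lt_1Bd_bBc bE cE dE.
have := sqr_ge0 (1 - x).
nra.
Qed.

Lemma cubic_real_roots_root_lt1 : 1 < b -> 0 < c -> 0 < d -> d < 1 ->
    1 - d < b - c -> 0 < b * c - d ->
    (forall z, root (map_poly (real_complex R) (cubic b c d)) z -> complex.Im z = 0) ->
  exists2 x, 0 < x < 1 & root (cubic b c d) x.
Proof.
move=> b_gt1 c_gt0 d_gt0 d_lt1 lt_1Bd_bBc bc_gtd real_roots.
have [r /andP[r_gt1 _] pr] := cubic_root_gt1 b_gt1 lt_1Bd_bBc bc_gtd.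
have r_neq0 : r != 0 by rewrite gt_eqF // (lt_trans ltr01).
have pE : cubic b c d = ('X - r%:P) * quadratic (b - r) (d / r).
  apply: cubic_factor; first by ring.
    exact: cubic_root_vieta.
  by rewrite mulrC divfK.
have root_cubic x : root (quadratic (b - r) (d / r)) x -> root (cubic b c d) x.
  by rewrite pE rootM orbC => ->.
have [w qw] : exists w, root (map_poly (real_complex R) (quadratic (b - r) (d / r))) w.
  by apply/closed_rootP; rewrite size_map_poly size_quadratic.
have wE : w = (complex.Re w)%:C.
  have := real_roots w; rewrite pE rmorphM rootM qw orbT => /(_ isT).
  by case: w {qw} => x y /= ->.
rewrite wE fmorph_root in qw.
have [qw' e_eq] := quadratic_root_pair qw.
have /andP[x_gt0 _] := cubic_root_bounds c_gt0 d_gt0 bc_gtd (root_cubic _ qw).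
have /andP[x'_gt0 _] := cubic_root_bounds c_gt0 d_gt0 bc_gtd (root_cubic _ qw').
have e_lt1 : d / r < 1 by rewrite ltr_pdivrMr ?mul1r; lra.
case: (ltP (complex.Re w) 1) => [x_lt1 | x_ge1].
  by exists (complex.Re w); [rewrite x_gt0 | exact: root_cubic].
exists (b - r - complex.Re w); last exact: root_cubic.
by rewrite x'_gt0 /=; nra.
Qed.

End RealClosedCubic.

Theorem proposition4p1 (R : realType) (A : 'M[R]_3) (b c d : R) :
  char_poly A = 'X^3 - b *: 'X^2 + c *: 'X - d%:P ->
  1 < b -> 0 < c -> 0 < d -> d < 1 -> 1 - d < b - c -> 0 < b * c - d ->
  let P := char_poly A in
  let PC := map_poly (real_complex R) P in
  (* (i) *) (forall x : R, root P x -> 0 < x < b) /\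
  (* (ii) *) (exists2 x : R, 1 < x < b & root P x) /\
  (* (iii) *) (forall z : R[i], root PC z -> complex.Im z != 0 -> `|z| < 1) /\
  (* (iv) *) ((forall z : R[i], root PC z -> complex.Im z = 0) ->
              exists2 x : R, 0 < x < 1 & root P x) /\
  (* (v) *) (exists x : R, [/\ 1 < x < b, root P x &
              forall y : R, 1 < y < b -> root P y -> y = x]).
Proof.
move=> PE b_gt1 c_gt0 d_gt0 d_lt1 lt_1Bd_bBc bc_gtd P PC.
rewrite {}/PC {}/P {}PE -/(cubic b c d).
split; first by move=> x; apply: cubic_root_bounds.
split; first exact: cubic_root_gt1.
split; first by move=> z; apply: cubic_nonreal_root_norm_lt1.
split; first exact: cubic_real_roots_root_lt1.
have [x x_in px] := cubic_root_gt1 b_gt1 lt_1Bd_bBc bc_gtd.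
exists x; split=> // y /andP[y_gt1 _] py.
case/andP: x_in => x_gt1 _.
exact: cubic_root_gt1_unique d_lt1 lt_1Bd_bBc y_gt1 x_gt1 py px.
Qed.
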